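(* Let $\{q_n:n\in\mathbb N\}$ be an enumeration of $\mathbb Q\cap[0,1]$. For $n\in\mathbb N$ let $f_n:[0,1]\to[-1,1]$, $f_n(x)=\sin\frac{1}{x-q_n}$ for $x\ne q_n$ and $f_n(q_n)=0$, and let $f(x)=\sum_{n=1}^\infty 2^{-n}f_n(x)$. Let $X=[0,1]\times[-1,1]$ and $E=\{(x,y)\in X: y=f(x)\}$. Then $E$ is connected, $E$ is an $H_1$-retract of $X$, but $E$ is not a $B_1$-retract of $X$.
   Context: A function $f:X\to Y$ between topological spaces is a Baire-one function if it is the pointwise limit of a sequence of continuous functions $f_n:X\to Y$; it is a Lebesgue-one function if $f^{-1}(F)$ is a $G_\delta$-set in $X$ for every closed $F\subseteq Y$. A subset $E$ of $X$ (with the subspace topology) is a $B_1$-retract (resp. $H_1$-retract) of $X$ if there exists a Baire-one (resp. Lebesgue-one) function $r:X\to E$ with $r(x)=x$ for all $x\in E$. *)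

From Stdlib Require Import Reals QArith Qreals.
Open Scope R_scope.

Definition pt := (R * R)%type.
Definition pset := pt -> Prop.

(* max-metric on R^2 (induces the usual topology of R^2) *)
Definition dist2 (p p' : pt) : R :=
  Rmax (Rabs (fst p - fst p')) (Rabs (snd p - snd p')).

Definition rel_open (S U : pset) : Prop :=
  (forall p, U p -> S p) /\
  (forall p, U p -> exists eps, eps > 0 /\
      forall p', S p' -> dist2 p p' < eps -> U p').

Definition rel_closed (S F : pset) : Prop :=
  (forall p, F p -> S p) /\ rel_open S (fun p => S p /\ ~ F p).

Definition G_delta (S A : pset) : Prop :=
  (forall p, A p -> S p) /\
  exists U : nat -> pset, (forall n, rel_open S (U n)) /\
    (forall p, S p -> (A p <-> forall n, U n p)).

Definition connected (S : pset) : Prop :=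
  ~ exists U V : pset, rel_open S U /\ rel_open S V /\
      (exists p, U p) /\ (exists p, V p) /\
      (forall p, ~ (U p /\ V p)) /\
      (forall p, S p -> U p \/ V p).

(* g is a map X -> Y (only values on X matter). *)
Definition maps_into' (X Y : pset) (g : pt -> pt) : Prop :=
  forall p, X p -> Y (g p).

Definition continuous_on (X Y : pset) (g : pt -> pt) : Prop :=
  maps_into' X Y g /\
  forall p, X p -> forall eps, eps > 0 -> exists delta, delta > 0 /\
    forall p', X p' -> dist2 p p' < delta -> dist2 (g p) (g p') < eps.

Definition pw_limit (X : pset) (gs : nat -> pt -> pt) (g : pt -> pt) : Prop :=
  forall p, X p -> forall eps, eps > 0 -> exists N, forall n, (n >= N)%nat ->
    dist2 (gs n p) (g p) < eps.

Definition baire_one (X Y : pset) (g : pt -> pt) : Prop :=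
  maps_into' X Y g /\
  exists gs : nat -> pt -> pt, (forall n, continuous_on X Y (gs n)) /\
    pw_limit X gs g.

Definition lebesgue_one (X Y : pset) (g : pt -> pt) : Prop :=
  maps_into' X Y g /\
  forall F : pset, rel_closed Y F -> G_delta X (fun p => X p /\ F (g p)).

Definition B1_retract (X E : pset) : Prop :=
  exists r : pt -> pt, baire_one X E r /\ (forall p, E p -> r p = p).

Definition H1_retract (X E : pset) : Prop :=
  exists r : pt -> pt, lebesgue_one X E r /\ (forall p, E p -> r p = p).

Definition Xsq : pset := fun p =>
  0 <= fst p <= 1 /\ -1 <= snd p <= 1.

Definition enumeration_Q01 (q : nat -> R) : Prop :=
  (forall n, exists r : Q, q n = Q2R r /\ 0 <= q n <= 1) /\
  (forall r : Q, 0 <= Q2R r <= 1 -> exists n, q n = Q2R r) /\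
  (forall n m, q n = q m -> n = m).

Definition fn (q : nat -> R) (n : nat) (x : R) : R :=
  if Req_EM_T x (q n) then 0 else sin (/ (x - q n)).

(* The partial sums of the series converge uniformly and only the n-th term is
   discontinuous at q n.  Hence f is continuous at every irrational point, while
   near q n it equals f (q n) + 2^-(n+1) sin (1 / (x - q n)) up to a small error.

   E is not a B1-retract: a path in E moving to the right crosses some rational
   q n for the last time and then cannot follow the oscillation of f there, so a
   continuous map from the (path connected) square into E has constant abscissa,
   and a pointwise limit of such maps cannot fix both (0, f 0) and (1, f 1).

   E is an H1-retract via (x, y) |-> (x, f x): the preimage of a closed set F is
   the closure of A = {x | (x, f x) in F} minus the rationals outside A.

   E is connected: given a separation into U and V, call x U-interior if all
   irrationals near x lie under U.  The points that are neither U- nor V-interior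
   form a closed set of rationals without isolated points, which is empty by
   Cantor's argument; then [0,1] is the disjoint union of two open sets, so one of
   them is empty, contradicting the density in E of graph points over irrationals. *)

From Stdlib Require Import Reals QArith Qreals Lra Lia Classical ClassicalEpsilon.
Open Scope R_scope.

Lemma half_pow_pos n : 0 < (/ 2) ^ n.
Proof. apply pow_lt; lra. Qed.

Lemma half_pow_le m k : (/ 2) ^ (m + k) <= (/ 2) ^ m.
Proof.
  induction k as [|k IH]; [rewrite Nat.add_0_r; lra|].
  rewrite Nat.add_succ_r; simpl pow.
  pose proof (half_pow_pos (m + k)); lra.
Qed.

Lemma half_pow_lt eps : 0 < eps -> exists N, (/ 2) ^ S N < eps.
Proof.
  intros Heps.
  destruct (pow_lt_1_zero (/ 2) ltac:(rewrite Rabs_right; lra) eps Heps) as [N HN].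
  exists N; specialize (HN (S N) ltac:(lia)).
  rewrite Rabs_right in HN; [exact HN|left; apply half_pow_pos].
Qed.

Lemma sum_tail_bound (a : nat -> R) l N :
  (forall n, Rabs (a n) <= (/ 2) ^ S n) -> infinite_sum a l ->
  Rabs (l - sum_f_R0 a N) <= (/ 2) ^ S N.
Proof.
  intros Ha Hl.
  assert (Hpart : forall k, Rabs (sum_f_R0 a (N + k) - sum_f_R0 a N)
                            <= (/ 2) ^ S N - (/ 2) ^ S (N + k)).
  { induction k as [|k IH]; [rewrite Nat.add_0_r, Rminus_diag, Rabs_R0; lra|].
    rewrite Nat.add_succ_r, tech5.
    pose proof (Ha (S (N + k))) as Hk.
    change ((/ 2) ^ S (S (N + k))) with (/ 2 * (/ 2) ^ S (N + k)) in *.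
    split_Rabs; lra. }
  apply Rnot_lt_le; intro Hgt.
  destruct (Hl (Rabs (l - sum_f_R0 a N) - (/ 2) ^ S N)) as [M HM]; [lra|].
  specialize (HM (N + M)%nat ltac:(lia)); unfold Rdist in HM.
  pose proof (Hpart M); pose proof (half_pow_pos (S (N + M))).
  split_Rabs; lra.
Qed.

Lemma continuity_pt_eps g x : continuity_pt g x ->
  forall eps, 0 < eps -> exists d, 0 < d /\
    forall y, Rabs (y - x) < d -> Rabs (g y - g x) < eps.
Proof.
  intros Hg eps Heps.
  destruct (Hg eps Heps) as [d [Hd Hgd]].
  exists d; split; [exact Hd|]; intros y Hy.
  destruct (Req_dec y x) as [->|Hne]; [rewrite Rminus_diag, Rabs_R0; exact Heps|].
  apply Hgd; split; [split; [exact I|congruence]|exact Hy].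
Qed.

Lemma continuity_pt_sum (g : nat -> R -> R) N x :
  (forall m, (m <= N)%nat -> continuity_pt (g m) x) ->
  continuity_pt (fun y => sum_f_R0 (fun m => g m y) N) x.
Proof.
  induction N as [|N IH]; intros Hg; [apply Hg; lia|].
  apply (continuity_pt_plus (fun y => sum_f_R0 (fun m => g m y) N) (g (S N)));
    [apply IH; intros; apply Hg|apply Hg]; lia.
Qed.

Lemma sum_f_R0_extract (g : nat -> R) n N : (n <= N)%nat ->
  sum_f_R0 g N = sum_f_R0 (fun m => if Nat.eqb m n then 0 else g m) N + g n.
Proof.
  induction N as [|N IH]; intros HnN.
  - replace n with 0%nat by lia; simpl; ring.
  - destruct (Nat.eq_dec n (S N)) as [->|Hne].
    + rewrite !tech5, Nat.eqb_refl.
      replace (sum_f_R0 g N)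
        with (sum_f_R0 (fun m => if Nat.eqb m (S N) then 0 else g m) N); [ring|].
      apply sum_eq; intros m Hm; destruct (Nat.eqb_spec m (S N)); [lia|reflexivity].
    + rewrite !tech5, IH by lia.
      destruct (Nat.eqb_spec (S N) n); [lia|ring].
Qed.

Definition cont_on_Icc (phi : R -> R) (a b : R) : Prop :=
  forall t, a <= t <= b -> forall eps, 0 < eps -> exists d, 0 < d /\
    forall u, a <= u <= b -> Rabs (u - t) < d -> Rabs (phi u - phi t) < eps.

Lemma cont_on_Icc_sub phi a b a' b' :
  a <= a' -> b' <= b -> cont_on_Icc phi a b -> cont_on_Icc phi a' b'.
Proof.
  intros Ha Hb Hc t Ht eps Heps.
  destruct (Hc t ltac:(lra) eps Heps) as [d [Hd Hphi]].
  exists d; split; [exact Hd|]; intros u Hu; apply Hphi; lra.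
Qed.

Lemma cont_on_Icc_reflect phi : cont_on_Icc phi 0 1 -> cont_on_Icc (fun t => phi (1 - t)) 0 1.
Proof.
  intros Hc t Ht eps Heps.
  destruct (Hc (1 - t) ltac:(lra) eps Heps) as [d [Hd Hphi]].
  exists d; split; [exact Hd|]; intros u Hu Hut.
  apply Hphi; [lra|]; split_Rabs; lra.
Qed.

(* The crossing is the supremum of [{t | phi t <= v}]. *)
Lemma last_crossing phi a b v : a < b -> cont_on_Icc phi a b -> phi a <= v -> v < phi b ->
  exists t, a <= t < b /\ phi t = v /\ forall u, t < u <= b -> v < phi u.
Proof.
  intros Hab Hc Ha Hb.
  set (Below := fun t => a <= t <= b /\ phi t <= v).
  destruct (completeness Below) as [m [Hub Hlub]].
  { exists b; intros t [Ht _]; lra. }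
  { exists a; split; [lra|exact Ha]. }
  assert (Ham : a <= m) by (apply Hub; split; [lra|exact Ha]).
  assert (Hmb : m <= b) by (apply Hlub; intros t [Ht _]; lra).
  assert (Hle : phi m <= v).
  { apply Rnot_lt_le; intro Hgt.
    destruct (Hc m ltac:(lra) (phi m - v) ltac:(lra)) as [d [Hd Hphi]].
    assert (Hnear : exists t, Below t /\ m - d < t).
    { apply NNPP; intro Hno.
      enough (m <= m - d) by lra.
      apply Hlub; intros t Ht; apply Rnot_lt_le; intro Hlt; apply Hno; eauto. }
    destruct Hnear as [t [[Ht Htv] Htd]].
    assert (t <= m) by (apply Hub; split; assumption).
    specialize (Hphi t Ht ltac:(split_Rabs; lra)); split_Rabs; lra. }
  assert (Hmb' : m < b) by (destruct (Req_dec m b); subst; lra).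
  assert (Hge : v <= phi m).
  { apply Rnot_lt_le; intro Hlt.
    destruct (Hc m ltac:(lra) (v - phi m) ltac:(lra)) as [d [Hd Hphi]].
    set (u := Rmin (m + d / 2) b).
    assert (m < u <= m + d / 2 /\ u <= b)
      by (unfold u; split; [split; [apply Rmin_glb_lt; lra|apply Rmin_l]|apply Rmin_r]).
    specialize (Hphi u ltac:(lra) ltac:(split_Rabs; lra)).
    assert (u <= m) by (apply Hub; split; [lra|split_Rabs; lra]); lra. }
  exists m; split; [lra|split; [lra|]].
  intros u Hu; apply Rnot_le_lt; intro Hphiu.
  assert (u <= m) by (apply Hub; split; [lra|exact Hphiu]); lra.
Qed.

Lemma ivt_Icc phi a b v : a < b -> cont_on_Icc phi a b -> phi a <= v -> v < phi b ->
  exists t, a <= t < b /\ phi t = v.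
Proof. intros. destruct (last_crossing phi a b v) as [t [? [? _]]]; eauto. Qed.

Definition order_convex (I : R -> Prop) : Prop :=
  forall x y z, I x -> I z -> x <= y <= z -> I y.

Definition rel_open1 (I P : R -> Prop) : Prop :=
  forall x, I x -> P x -> exists d, 0 < d /\ forall y, I y -> Rabs (y - x) < d -> P y.

Lemma rel_open1_sub I J P : (forall x, I x -> J x) -> rel_open1 J P -> rel_open1 I P.
Proof.
  intros HIJ HP x Hx Px.
  destruct (HP x (HIJ x Hx) Px) as [d [Hd HPd]].
  exists d; split; [exact Hd|]; intros y Hy; apply HPd, HIJ, Hy.
Qed.

(* The indicator of [P] would be continuous on [[x1, x2]] and miss the value 1/2. *)
Lemma interval_connected_lt I P Q : order_convex I ->
  rel_open1 I P -> rel_open1 I Q ->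
  (forall x, I x -> P x \/ Q x) -> (forall x, I x -> P x -> Q x -> False) ->
  forall x1 x2, x1 < x2 -> I x1 -> I x2 -> P x1 -> Q x2 -> False.
Proof.
  intros Hconv HP HQ Hcov Hdis x1 x2 Hlt I1 I2 P1 Q2.
  set (chi := fun t => if excluded_middle_informative (P t) then 0 else 1).
  assert (HI : forall t, x1 <= t <= x2 -> I t) by (intros t Ht; exact (Hconv x1 t x2 I1 I2 Ht)).
  assert (Hchi_eq : forall t u, (P t <-> P u) -> chi u = chi t).
  { intros t u Htu; unfold chi.
    destruct (excluded_middle_informative (P t)), (excluded_middle_informative (P u)); tauto. }
  assert (Hcont : cont_on_Icc chi x1 x2).
  { intros t Ht eps Heps.
    destruct (Hcov t (HI t Ht)) as [Pt|Qt].
    - destruct (HP t (HI t Ht) Pt) as [d [Hd HPd]].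
      exists d; split; [exact Hd|]; intros u Hu Hut.
      rewrite (Hchi_eq t u); [rewrite Rminus_diag, Rabs_R0; exact Heps|].
      split; intros _; [apply HPd; [apply HI|]; assumption|exact Pt].
    - destruct (HQ t (HI t Ht) Qt) as [d [Hd HQd]].
      exists d; split; [exact Hd|]; intros u Hu Hut.
      rewrite (Hchi_eq t u); [rewrite Rminus_diag, Rabs_R0; exact Heps|].
      split; intros Hp; exfalso; [exact (Hdis t (HI t Ht) Hp Qt)|].
      exact (Hdis u (HI u Hu) Hp (HQd u (HI u Hu) Hut)). }
  destruct (ivt_Icc chi x1 x2 (1 / 2) Hlt Hcont) as [t [_ Ht]];
    unfold chi in *.
  - destruct (excluded_middle_informative (P x1)); [lra|contradiction].
  - destruct (excluded_middle_informative (P x2)) as [P2|]; [|lra].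
    exfalso; exact (Hdis x2 I2 P2 Q2).
  - destruct (excluded_middle_informative (P t)); lra.
Qed.

Lemma interval_connected I P Q : order_convex I ->
  rel_open1 I P -> rel_open1 I Q ->
  (forall x, I x -> P x \/ Q x) -> (forall x, I x -> P x -> Q x -> False) ->
  forall x1 x2, I x1 -> I x2 -> P x1 -> Q x2 -> False.
Proof.
  intros Hconv HP HQ Hcov Hdis x1 x2 I1 I2 P1 Q2.
  destruct (Rtotal_order x1 x2) as [Hlt|[<-|Hgt]].
  - exact (interval_connected_lt I P Q Hconv HP HQ Hcov Hdis x1 x2 Hlt I1 I2 P1 Q2).
  - exact (Hdis x1 I1 P1 Q2).
  - refine (interval_connected_lt I Q P Hconv HQ HP _ _ x2 x1 Hgt I2 I1 Q2 P1).
    + intros x Hx; apply or_comm, Hcov, Hx.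
    + intros x Hx Qx Px; exact (Hdis x Hx Px Qx).
Qed.

Definition closed_in_R (K : R -> Prop) : Prop :=
  forall x, (forall e, 0 < e -> exists k, K k /\ Rabs (k - x) < e) -> K x.

Definition dense_in_itself (K : R -> Prop) : Prop :=
  forall k, K k -> forall d, 0 < d -> exists k', K k' /\ k' <> k /\ Rabs (k' - k) < d.

Definition meets (K : R -> Prop) (l u : R) : Prop := exists k, K k /\ l < k < u.

Lemma meets_shrink_avoiding K l u c eps : dense_in_itself K -> meets K l u -> 0 < eps ->
  exists l' u', meets K l' u' /\ l <= l' /\ u' <= u /\ u' - l' <= eps /\ (c < l' \/ u' < c).
Proof.
  intros Hperf [k [Hk Hlu]] Heps.
  assert (Hk2 : exists k2, K k2 /\ l < k2 < u /\ k2 <> c).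
  { destruct (Req_dec k c) as [->|Hne]; [|exists k; auto].
    destruct (Hperf c Hk (Rmin (c - l) (u - c))) as [k' [Hk' [Hne Hd]]];
      [apply Rmin_pos; lra|].
    pose proof (Rmin_l (c - l) (u - c)); pose proof (Rmin_r (c - l) (u - c)).
    exists k'; split; [exact Hk'|split; [split_Rabs; lra|exact Hne]]. }
  destruct Hk2 as [k2 [Hk2 [Hin Hne]]].
  assert (Hdist : 0 < Rabs (k2 - c)) by (apply Rabs_pos_lt; lra).
  set (r := Rmin (Rmin (k2 - l) (u - k2)) (Rmin (Rabs (k2 - c)) eps) / 2).
  assert (Hr : 0 < 2 * r <= k2 - l /\ 2 * r <= u - k2 /\ 2 * r <= Rabs (k2 - c) /\ 2 * r <= eps).
  { unfold r.
    pose proof (Rmin_l (Rmin (k2 - l) (u - k2)) (Rmin (Rabs (k2 - c)) eps)).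
    pose proof (Rmin_r (Rmin (k2 - l) (u - k2)) (Rmin (Rabs (k2 - c)) eps)).
    pose proof (Rmin_l (k2 - l) (u - k2)); pose proof (Rmin_r (k2 - l) (u - k2)).
    pose proof (Rmin_l (Rabs (k2 - c)) eps); pose proof (Rmin_r (Rabs (k2 - c)) eps).
    assert (0 < Rmin (Rmin (k2 - l) (u - k2)) (Rmin (Rabs (k2 - c)) eps))
      by (repeat apply Rmin_pos; lra).
    lra. }
  exists (k2 - r), (k2 + r); split; [exists k2; split; [exact Hk2|lra]|].
  split; [lra|split; [lra|split; [lra|split_Rabs; lra]]].
Qed.

(* Cantor's nested-interval argument: at stage [j] the interval is shrunk so as
   to avoid [c j] while still meeting [K]. *)
Lemma dense_in_itself_not_enumerated (K : R -> Prop) (c : nat -> R) :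
  (exists k, K k) -> closed_in_R K -> dense_in_itself K -> exists x, K x /\ forall m, x <> c m.
Proof.
  intros [k0 Hk0] Hcl Hperf.
  assert (Hstep : forall js : nat * (R * R), exists s',
    meets K (fst (snd js)) (snd (snd js)) ->
    meets K (fst s') (snd s') /\ fst (snd js) <= fst s' /\ snd s' <= snd (snd js) /\
    snd s' - fst s' <= / INR (S (fst js)) /\ (c (fst js) < fst s' \/ snd s' < c (fst js))).
  { intros [j [l u]]; cbn [fst snd].
    destruct (classic (meets K l u)) as [Hm|Hm]; [|exists (l, u); tauto].
    destruct (meets_shrink_avoiding K l u (c j) (/ INR (S j)) Hperf Hm) as [l' [u' H]];
      [apply Rinv_0_lt_compat, lt_0_INR; lia|].
    exists (l', u'); intros _; exact H. }
  destruct (choice _ Hstep) as [step Hst]; cbn [fst snd] in Hst.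
  pose (s := fix s j := match j with O => (k0 - 1, k0 + 1) | S j => step (j, s j) end).
  assert (Hmeets : forall j, meets K (fst (s j)) (snd (s j))).
  { induction j as [|j IH]; [exists k0; simpl; split; [exact Hk0|lra]|].
    apply (Hst (j, s j) IH). }
  assert (Hnest : forall i k, fst (s i) <= fst (s (i + k)%nat) /\ snd (s (i + k)%nat) <= snd (s i)).
  { intros i k; induction k as [|k IH]; [rewrite Nat.add_0_r; lra|].
    rewrite Nat.add_succ_r; change (s (S (i + k))) with (step (i + k, s (i + k))%nat).
    destruct (Hst (i + k, s (i + k))%nat (Hmeets _)) as [_ [? [? _]]]; cbn [fst snd] in *; lra. }
  assert (Hlr : forall i j, fst (s i) < snd (s j)).
  { intros i j; destruct (Hnest i j), (Hnest j i), (Hmeets (i + j)%nat) as [k [_ Hk]].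
    rewrite (Nat.add_comm j i) in *; lra. }
  destruct (completeness (fun x => exists j, x = fst (s j))) as [L [Hub Hlub]].
  { exists (snd (s O)); intros x [j ->]; left; apply Hlr. }
  { exists (fst (s O)), O; reflexivity. }
  assert (HL : forall j, fst (s j) <= L <= snd (s j)).
  { intros j; split; [apply Hub; exists j; reflexivity|].
    apply Hlub; intros x [i ->]; left; apply Hlr. }
  exists L; split.
  - apply Hcl; intros e He.
    destruct (archimed_cor1 e He) as [[|j] [Hj Hj0]]; [lia|].
    destruct (Hst (j, s j) (Hmeets j)) as [[k [Hk Hks]] [_ [_ [Hlen _]]]].
    pose proof (HL (S j)) as HLj; change (s (S j)) with (step (j, s j)) in HLj.
    exists k; split; [exact Hk|]; cbn [fst snd] in *; split_Rabs; lra.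
  - intros m Hm; pose proof (HL (S m)) as HLm; change (s (S m)) with (step (m, s m)) in HLm.
    destruct (Hst (m, s m) (Hmeets m)) as [_ [_ [_ [_ Hc]]]]; cbn [fst snd] in *; lra.
Qed.

Lemma exists_not_enumerated (c : nat -> R) a b : a < b -> exists y, a < y < b /\ forall m, y <> c m.
Proof.
  intros Hab.
  destruct (dense_in_itself_not_enumerated (fun x => 3 * a + b <= 4 * x <= a + 3 * b) c)
    as [y [Hy Hyc]].
  - exists ((a + b) / 2); lra.
  - intros x Hx; split; apply Rnot_lt_le; intro Hout;
      [destruct (Hx ((3 * a + b) / 4 - x)) as [k [Hk Hkx]]
      |destruct (Hx (x - (a + 3 * b) / 4)) as [k [Hk Hkx]]]; try lra; split_Rabs; lra.
  - intros k Hk d Hd.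
    set (h := Rmin d ((b - a) / 4) / 2).
    assert (0 < h <= d / 2 /\ h <= (b - a) / 8)
      by (unfold h; pose proof (Rmin_l d ((b - a) / 4)); pose proof (Rmin_r d ((b - a) / 4));
          assert (0 < Rmin d ((b - a) / 4)) by (apply Rmin_pos; lra); lra).
    destruct (Rlt_or_le (2 * k) (a + b)) as [Hleft|Hright];
      [exists (k + h)|exists (k - h)]; (split; [lra|split; [lra|split_Rabs; lra]]).
  - exists y; split; [lra|exact Hyc].
Qed.

Lemma rational_between a b : a < b -> exists r : Q, a < Q2R r < b.
Proof.
  intros Hab.
  destruct (archimed (/ (b - a))) as [HM _].
  assert (Hinv : 0 < / (b - a)) by (apply Rinv_0_lt_compat; lra).
  set (M := up (/ (b - a))) in *.
  assert (HMpos : (0 < M)%Z) by (apply lt_IZR; lra).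
  destruct (archimed (a * IZR M)) as [Hz1 Hz2].
  exists (Qmake (up (a * IZR M)) (Z.to_pos M)).
  unfold Q2R; simpl; rewrite Z2Pos.id by exact HMpos.
  assert (HM' : 0 < IZR M) by lra.
  assert (1 < (b - a) * IZR M).
  { apply (Rmult_lt_reg_l (/ (b - a))); [exact Hinv|].
    rewrite <- Rmult_assoc, Rinv_l by lra; lra. }
  split; apply (Rmult_lt_reg_r (IZR M)); try exact HM';
    rewrite Rmult_assoc, Rinv_l by lra; lra.
Qed.

Lemma interval_around a b z d : a < b -> a <= z <= b -> 0 < d ->
  exists a' b', a <= a' < b' /\ b' <= b /\ a' <= z <= b' /\ z - d <= a' /\ b' <= z + d.
Proof.
  intros Hab Hz Hd.
  exists (Rmax a (z - d)), (Rmin b (z + d)).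
  pose proof (Rmax_l a (z - d)); pose proof (Rmax_r a (z - d)).
  pose proof (Rmin_l b (z + d)); pose proof (Rmin_r b (z + d)).
  assert (Rmax a (z - d) < Rmin b (z + d))
    by (apply Rmax_lub_lt; apply Rmin_glb_lt; lra).
  assert (Rmax a (z - d) <= z) by (apply Rmax_lub; lra).
  assert (z <= Rmin b (z + d)) by (apply Rmin_glb; lra).
  lra.
Qed.

Lemma sin_inv_zero_small d : 0 < d -> exists w, 0 < w < d /\ sin (/ w) = 0.
Proof.
  intros Hd.
  destruct (archimed_cor1 d Hd) as [N [HN HN0]].
  pose proof PI2_1; assert (HNpos : 1 <= INR N) by (apply (le_INR 1); lia).
  exists (/ (INR N * PI)); split; [split|].
  - apply Rinv_0_lt_compat; nra.
  - apply (Rle_lt_trans _ (/ INR N)); [apply Rinv_le_contravar; nra|exact HN].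
  - rewrite Rinv_inv; apply sin_eq_0_1; exists (Z.of_nat N); rewrite <- INR_IZR_INZ; reflexivity.
Qed.

Lemma sin_inv_root a b c : a < b -> a <= c <= b ->
  exists y, a < y < b /\ y <> c /\ sin (/ (y - c)) = 0.
Proof.
  intros Hab Hc.
  destruct (Rlt_or_le c b) as [Hcb|Hbc].
  - destruct (sin_inv_zero_small (b - c)) as [w [Hw Hsin]]; [lra|].
    exists (c + w); split; [lra|split; [lra|]]; replace (c + w - c) with w by ring; exact Hsin.
  - destruct (sin_inv_zero_small (c - a)) as [w [Hw Hsin]]; [lra|].
    exists (c - w); split; [lra|split; [lra|]].
    replace (c - w - c) with (- w) by ring; rewrite Rinv_opp, sin_neg, Hsin; ring.
Qed.

Lemma sin_inv_peaks c b : c < b ->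
  exists y1 y2, c < y1 < b /\ c < y2 < b /\ sin (/ (y1 - c)) = 1 /\ sin (/ (y2 - c)) = -1.
Proof.
  intros Hcb.
  destruct (archimed_cor1 (b - c)) as [N [HN HN0]]; [lra|].
  pose proof PI2_1; assert (HNpos : 1 <= INR N) by (apply (le_INR 1); lia).
  set (w1 := PI / 2 + 2 * INR N * PI); set (w2 := 3 * (PI / 2) + 2 * INR N * PI).
  assert (Hw : INR N < w1 < w2) by (unfold w1, w2; nra).
  assert (Hinv1 : 0 < / w1 < / INR N)
    by (split; [apply Rinv_0_lt_compat|apply Rinv_lt_contravar]; nra).
  assert (Hinv2 : 0 < / w2 < / w1)
    by (split; [apply Rinv_0_lt_compat|apply Rinv_lt_contravar]; nra).
  exists (c + / w1), (c + / w2).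
  replace (c + / w1 - c) with (/ w1) by ring; replace (c + / w2 - c) with (/ w2) by ring.
  rewrite !Rinv_inv.
  assert (sin w1 = 1) by (unfold w1; rewrite sin_period; apply sin_PI2).
  assert (sin w2 = -1) by (unfold w2; rewrite sin_period; apply sin_3PI2).
  repeat split; lra.
Qed.

Lemma dist2_fst_le p p' : Rabs (fst p - fst p') <= dist2 p p'.
Proof. apply Rmax_l. Qed.

Lemma dist2_snd_le p p' : Rabs (snd p - snd p') <= dist2 p p'.
Proof. apply Rmax_r. Qed.

Definition segment (p p' : pt) (t : R) : pt :=
  (fst p + t * (fst p' - fst p), snd p + t * (snd p' - snd p)).

Lemma segment_in_Xsq p p' t : Xsq p -> Xsq p' -> 0 <= t <= 1 -> Xsq (segment p p' t).
Proof. unfold Xsq, segment; simpl; intros; split; nra. Qed.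

Lemma dist2_segment p p' t u :
  dist2 (segment p p' t) (segment p p' u) <= Rabs (t - u) * dist2 p p'.
Proof.
  unfold segment, dist2; simpl.
  replace (fst p + t * (fst p' - fst p) - (fst p + u * (fst p' - fst p)))
    with ((t - u) * - (fst p - fst p')) by ring.
  replace (snd p + t * (snd p' - snd p) - (snd p + u * (snd p' - snd p)))
    with ((t - u) * - (snd p - snd p')) by ring.
  rewrite !Rabs_mult, !Rabs_Ropp, RmaxRmult by apply Rabs_pos; lra.
Qed.

Lemma continuous_on_segment (Y : pset) g p p' : continuous_on Xsq Y g -> Xsq p -> Xsq p' ->
  forall t, 0 <= t <= 1 -> forall eps, 0 < eps -> exists d, 0 < d /\
    forall u, 0 <= u <= 1 -> Rabs (u - t) < d ->
      dist2 (g (segment p p' t)) (g (segment p p' u)) < eps.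
Proof.
  intros [_ Hg] Hp Hp' t Ht eps Heps.
  destruct (Hg (segment p p' t) (segment_in_Xsq p p' t Hp Hp' Ht) eps Heps) as [d [Hd Hgd]].
  pose proof (Rle_trans _ _ _ (Rabs_pos (fst p - fst p')) (dist2_fst_le p p')) as Hpp'.
  exists (d / (dist2 p p' + 1)); split; [apply Rdiv_lt_0_compat; lra|]; intros u Hu Hut.
  apply Hgd; [apply segment_in_Xsq; assumption|].
  eapply Rle_lt_trans; [apply dist2_segment|].
  rewrite Rabs_minus_sym.
  apply (Rmult_lt_compat_r (dist2 p p' + 1)) in Hut; [|lra].
  unfold Rdiv in Hut; rewrite Rmult_assoc, Rinv_l, Rmult_1_r in Hut by lra.
  pose proof (Rabs_pos (u - t)); nra.
Qed.

Lemma G_delta_cylinder (A : R -> Prop) (O : nat -> R -> Prop) :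
  (forall n, rel_open1 (fun x => 0 <= x <= 1) (O n)) ->
  (forall x, 0 <= x <= 1 -> (A x <-> forall n, O n x)) ->
  G_delta Xsq (fun p => Xsq p /\ A (fst p)).
Proof.
  intros HO HA; split; [intros p [Hp _]; exact Hp|].
  exists (fun n p => Xsq p /\ O n (fst p)); split.
  - intros n; split; [intros p [Hp _]; exact Hp|]; intros p [Hp HOp].
    destruct (HO n (fst p) (proj1 Hp) HOp) as [d [Hd HOd]].
    exists d; split; [exact Hd|]; intros p' Hp' Hpp'; split; [exact Hp'|].
    apply HOd; [apply Hp'|]; pose proof (dist2_fst_le p p'); split_Rabs; lra.
  - intros p Hp; rewrite (HA (fst p) (proj1 Hp)); split;
      [intros [_ HOp] n; split; [exact Hp|apply HOp]|intros HOp; split; [exact Hp|apply HOp]].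
Qed.

Lemma sin_inv_continuity_pt c x : x <> c -> continuity_pt (fun y => sin (/ (y - c))) x.
Proof. intros Hx; apply derivable_continuous_pt; reg; lra. Qed.

Section SineSeries.

Variables (q : nat -> R) (f : R -> R).
Hypothesis q_enum : enumeration_Q01 q.
Hypothesis f_series :
  forall x, 0 <= x <= 1 -> infinite_sum (fun n => (/ 2) ^ (S n) * fn q n x) (f x).

Definition term (n : nat) (x : R) : R := (/ 2) ^ S n * fn q n x.
Definition psum (N : nat) (x : R) : R := sum_f_R0 (fun n => term n x) N.
Definition irrational01 (y : R) : Prop := 0 <= y <= 1 /\ forall n, y <> q n.

Lemma irrational01_intro x : 0 <= x <= 1 -> ~ (exists n, x = q n) -> irrational01 x.
Proof. intros Hx Hq; split; [exact Hx|intros n ->; apply Hq; exists n; reflexivity]. Qed.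

Lemma q_range n : 0 <= q n <= 1.
Proof. destruct q_enum as [Hq _]; destruct (Hq n) as [r [_ H]]; exact H. Qed.

Lemma q_injective n m : q n = q m -> n = m.
Proof. destruct q_enum as [_ [_ Hinj]]; apply Hinj. Qed.

Lemma fn_at_q n : fn q n (q n) = 0.
Proof. unfold fn; destruct (Req_EM_T (q n) (q n)); [reflexivity|congruence]. Qed.

Lemma fn_off_q n x : x <> q n -> fn q n x = sin (/ (x - q n)).
Proof. intros Hx; unfold fn; destruct (Req_EM_T x (q n)); [contradiction|reflexivity]. Qed.

Lemma fn_abs_le n x : Rabs (fn q n x) <= 1.
Proof.
  unfold fn; destruct (Req_EM_T x (q n)); [rewrite Rabs_R0; lra|].
  apply Rabs_le, SIN_bound.
Qed.

Lemma fn_continuity_pt n x : x <> q n -> continuity_pt (fn q n) x.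
Proof.
  intros Hx.
  apply (continuity_pt_locally_ext (fun y => sin (/ (y - q n))) _ (Rabs (x - q n)));
    [apply Rabs_pos_lt; lra| |apply sin_inv_continuity_pt, Hx].
  intros y Hy; unfold Rdist in Hy; symmetry; apply fn_off_q; intros ->.
  rewrite Rabs_minus_sym in Hy; lra.
Qed.

Lemma term_continuity_pt n x : x <> q n -> continuity_pt (term n) x.
Proof. intros Hx; apply continuity_pt_scal, fn_continuity_pt, Hx. Qed.

Lemma term_abs_le n x : Rabs (term n x) <= (/ 2) ^ S n * Rabs (fn q n x).
Proof.
  unfold term; rewrite Rabs_mult, (Rabs_right ((/ 2) ^ S n)); [lra|left; apply half_pow_pos].
Qed.

Lemma term_abs_le_weight n x : Rabs (term n x) <= (/ 2) ^ S n.
Proof.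
  pose proof (term_abs_le n x); pose proof (fn_abs_le n x); pose proof (half_pow_pos (S n)); nra.
Qed.

Lemma term_abs_le_fn n x : Rabs (term n x) <= Rabs (fn q n x).
Proof.
  pose proof (term_abs_le n x); pose proof (Rabs_pos (fn q n x)).
  pose proof (half_pow_le 1 n); simpl in *; nra.
Qed.

Lemma f_sub_psum N x : 0 <= x <= 1 -> Rabs (f x - psum N x) <= (/ 2) ^ S N.
Proof.
  intros Hx; unfold psum; apply sum_tail_bound;
    [intros n; apply term_abs_le_weight|apply f_series, Hx].
Qed.

Lemma f_range x : 0 <= x <= 1 -> -1 <= f x <= 1.
Proof.
  intros Hx; pose proof (f_sub_psum 0 x Hx); pose proof (term_abs_le_weight 0 x).
  unfold psum in *; simpl in *; split_Rabs; lra.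
Qed.

(* Uniform convergence of [psum N] to [f] on [[0,1]]. *)
Lemma f_sub_continuous g x N0 : 0 <= x <= 1 ->
  (forall N, (N0 <= N)%nat -> continuity_pt (fun y => psum N y - g y) x) ->
  forall eps, 0 < eps -> exists d, 0 < d /\
    forall y, 0 <= y <= 1 -> Rabs (y - x) < d -> Rabs (f y - g y - (f x - g x)) < eps.
Proof.
  intros Hx Hcont eps Heps.
  destruct (half_pow_lt (eps / 4)) as [N1 HN1]; [lra|].
  assert (HN : (/ 2) ^ S (N1 + N0) < eps / 4)
    by (pose proof (half_pow_le (S N1) N0); simpl in *; lra).
  destruct (continuity_pt_eps _ _ (Hcont (N1 + N0)%nat ltac:(lia)) (eps / 2)) as [d [Hd Hclose]];
    [lra|].
  exists d; split; [exact Hd|]; intros y Hy Hyx.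
  specialize (Hclose y Hyx).
  pose proof (f_sub_psum (N1 + N0) x Hx); pose proof (f_sub_psum (N1 + N0) y Hy).
  split_Rabs; lra.
Qed.

Lemma f_continuous_irrational x : irrational01 x ->
  forall eps, 0 < eps -> exists d, 0 < d /\
    forall y, 0 <= y <= 1 -> Rabs (y - x) < d -> Rabs (f y - f x) < eps.
Proof.
  intros [Hx Hirr] eps Heps.
  destruct (f_sub_continuous (fun _ => 0) x 0 Hx) with (eps := eps) as [d [Hd Hclose]];
    [|exact Heps|].
  - intros N _; apply (continuity_pt_minus (psum N) (fun _ => 0));
      [|apply continuity_pt_const; intros ? ?; reflexivity].
    apply continuity_pt_sum; intros m _; apply term_continuity_pt, Hirr.
  - exists d; split; [exact Hd|]; intros y Hy Hyx.
    specialize (Hclose y Hy Hyx); rewrite !Rminus_0_r in Hclose; exact Hclose.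
Qed.

Lemma f_sub_term_continuous n :
  forall eps, 0 < eps -> exists d, 0 < d /\
    forall y, 0 <= y <= 1 -> Rabs (y - q n) < d -> Rabs (f y - term n y - f (q n)) < eps.
Proof.
  intros eps Heps.
  destruct (f_sub_continuous (term n) (q n) n (q_range n)) with (eps := eps)
    as [d [Hd Hclose]]; [|exact Heps|].
  - intros N HnN.
    apply (continuity_pt_locally_ext
             (fun y => sum_f_R0 (fun m => if Nat.eqb m n then 0 else term m y) N) _ 1);
      [lra|intros y _; unfold psum;
       rewrite (sum_f_R0_extract (fun m => term m y) n N HnN); cbv beta; ring|].
    apply continuity_pt_sum; intros m _.
    destruct (Nat.eqb_spec m n) as [->|Hmn];
      [apply continuity_pt_const; intros ? ?; reflexivity|].
    apply term_continuity_pt; intros Hq; apply Hmn, q_injective; congruence.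
  - exists d; split; [exact Hd|]; intros y Hy Hyx.
    specialize (Hclose y Hy Hyx); unfold term at 2 in Hclose.
    rewrite fn_at_q, Rmult_0_r, Rminus_0_r in Hclose; exact Hclose.
Qed.

Lemma irrational01_near a b z d : 0 <= a -> a < b -> b <= 1 -> a <= z <= b -> 0 < d ->
  exists y, irrational01 y /\ a < y < b /\ Rabs (y - z) < d.
Proof.
  intros Ha Hab Hb Hz Hd.
  destruct (interval_around a b z d Hab Hz Hd) as [a' [b' Hab']].
  destruct (exists_not_enumerated q a' b') as [y [Hy Hirr]]; [lra|].
  exists y; split; [split; [lra|exact Hirr]|split; [lra|split_Rabs; lra]].
Qed.

(* At a rational point [q n] the approximating points are taken near a zero of
   [sin (1 / (y - q n))], where the [n]-th term is negligible. *)
Lemma f_approx_irrational x a b eps : 0 <= a -> a < b -> b <= 1 -> a <= x <= b -> 0 < eps ->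
  exists y, irrational01 y /\ a < y < b /\ Rabs (f y - f x) < eps.
Proof.
  intros Ha Hab Hb Hx Heps.
  destruct (classic (exists n, x = q n)) as [[n ->]|Hirr].
  - destruct (f_sub_term_continuous n (eps / 2)) as [eta [Heta Hnear]]; [lra|].
    destruct (interval_around a b (q n) eta Hab Hx Heta) as [a' [b' Hab']].
    destruct (sin_inv_root a' b' (q n)) as [y0 [Hy0 [Hy0q Hsin0]]]; [lra|lra|].
    destruct (continuity_pt_eps _ _ (sin_inv_continuity_pt (q n) y0 Hy0q) (eps / 2))
      as [d [Hd Hsin]]; [lra|].
    destruct (irrational01_near a' b' y0 d) as [y [[Hy Hyirr] [Hyab Hyd]]]; [lra..|].
    exists y; split; [split; [exact Hy|exact Hyirr]|split; [lra|]].
    specialize (Hnear y Hy ltac:(split_Rabs; lra)).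
    specialize (Hsin y Hyd); rewrite Hsin0, Rminus_0_r in Hsin.
    pose proof (term_abs_le_fn n y); rewrite fn_off_q in * by apply Hyirr.
    split_Rabs; lra.
  - assert (Hxirr : irrational01 x) by (apply irrational01_intro; [lra|exact Hirr]).
    destruct (f_continuous_irrational x Hxirr eps Heps) as [d [Hd Hclose]].
    destruct (irrational01_near a b x d) as [y [[Hy Hyirr] [Hyab Hyd]]]; [lra..|].
    exists y; split; [split; assumption|split; [lra|apply Hclose; assumption]].
Qed.

Lemma f_oscillates_right n b : q n < b <= 1 ->
  exists v1 v2, q n < v1 < b /\ q n < v2 < b /\ (/ 2) ^ S n < f v1 - f v2.
Proof.
  intros Hb; pose proof (q_range n); pose proof (half_pow_pos (S n)).
  destruct (f_sub_term_continuous n ((/ 2) ^ S n / 4)) as [eta [Heta Hnear]]; [lra|].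
  destruct (sin_inv_peaks (q n) (Rmin b (q n + eta))) as [v1 [v2 [Hv1 [Hv2 [Hs1 Hs2]]]]];
    [apply Rmin_glb_lt; lra|].
  pose proof (Rmin_l b (q n + eta)); pose proof (Rmin_r b (q n + eta)).
  exists v1, v2; split; [lra|split; [lra|]].
  pose proof (Hnear v1 ltac:(lra) ltac:(split_Rabs; lra)) as Hn1.
  pose proof (Hnear v2 ltac:(lra) ltac:(split_Rabs; lra)) as Hn2.
  unfold term in Hn1, Hn2; rewrite fn_off_q in Hn1, Hn2 by lra.
  rewrite Hs1 in Hn1; rewrite Hs2 in Hn2; split_Rabs; lra.
Qed.


Lemma graph_path_not_increasing phi : (forall t, 0 <= t <= 1 -> 0 <= phi t <= 1) ->
  cont_on_Icc phi 0 1 -> cont_on_Icc (fun t => f (phi t)) 0 1 -> ~ phi 0 < phi 1.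
Proof.
  intros Hrange Hphi Hfphi Hlt.
  pose proof (Hrange 0 ltac:(lra)); pose proof (Hrange 1 ltac:(lra)).
  destruct (rational_between (phi 0) (phi 1) Hlt) as [r Hr].
  destruct q_enum as [_ [Hsurj _]]; destruct (Hsurj r ltac:(lra)) as [n Hn].
  destruct (last_crossing phi 0 1 (q n)) as [ts [Hts [Hcross Habove]]]; [lra|exact Hphi|lra|lra|].
  set (c := (/ 2) ^ S n); assert (Hc : 0 < c) by apply half_pow_pos.
  destruct (Hfphi ts ltac:(lra) (c / 2) ltac:(lra)) as [d [Hd Hfd]].
  set (s := Rmin (ts + d / 2) 1).
  assert (ts < s <= ts + d / 2 /\ s <= 1)
    by (unfold s; split; [split; [apply Rmin_glb_lt; lra|apply Rmin_l]|apply Rmin_r]).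
  pose proof (Habove s ltac:(lra)); pose proof (Hrange s ltac:(lra)).
  destruct (f_oscillates_right n (phi s)) as [v1 [v2 [Hv1 [Hv2 Hosc]]]]; [lra|].
  assert (Hsub : cont_on_Icc phi ts s) by (apply (cont_on_Icc_sub phi 0 1); lra || exact Hphi).
  destruct (ivt_Icc phi ts s v1) as [t1 [Ht1 <-]]; [lra|exact Hsub|lra|lra|].
  destruct (ivt_Icc phi ts s v2) as [t2 [Ht2 <-]]; [lra|exact Hsub|lra|lra|].
  pose proof (Hfd t1 ltac:(lra) ltac:(split_Rabs; lra)).
  pose proof (Hfd t2 ltac:(lra) ltac:(split_Rabs; lra)).
  cbv beta in *; rewrite Hcross in *; fold c in Hosc; split_Rabs; lra.
Qed.

Lemma graph_path_endpoints phi : (forall t, 0 <= t <= 1 -> 0 <= phi t <= 1) ->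
  cont_on_Icc phi 0 1 -> cont_on_Icc (fun t => f (phi t)) 0 1 -> phi 0 = phi 1.
Proof.
  intros Hrange Hphi Hfphi.
  destruct (Rtotal_order (phi 0) (phi 1)) as [Hlt|[Heq|Hgt]]; [exfalso| exact Heq|exfalso].
  - exact (graph_path_not_increasing phi Hrange Hphi Hfphi Hlt).
  - apply (graph_path_not_increasing (fun t => phi (1 - t)));
      [intros t Ht; apply Hrange; lra
      |apply cont_on_Icc_reflect, Hphi
      |apply (cont_on_Icc_reflect (fun t => f (phi t))), Hfphi|].
    rewrite Rminus_0_r, Rminus_diag; exact Hgt.
Qed.

Definition graph : pset := fun p => Xsq p /\ snd p = f (fst p).

Lemma graph_intro x : 0 <= x <= 1 -> graph (x, f x).
Proof. intros Hx; split; [split; [exact Hx|apply f_range, Hx]|reflexivity]. Qed.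

Lemma continuous_into_graph_fst_const g p p' : continuous_on Xsq graph g ->
  Xsq p -> Xsq p' -> fst (g p) = fst (g p').
Proof.
  intros Hg Hp Hp'.
  assert (Hin : forall t, 0 <= t <= 1 -> graph (g (segment p p' t)))
    by (intros t Ht; apply (proj1 Hg), segment_in_Xsq; assumption).
  assert (Hends : fst (g (segment p p' 0)) = fst (g (segment p p' 1))).
  { apply (graph_path_endpoints (fun t => fst (g (segment p p' t))));
      [intros t Ht; apply (Hin t Ht)| |]; intros t Ht eps Heps;
      destruct (continuous_on_segment graph g p p' Hg Hp Hp' t Ht eps Heps) as [d [Hd Hgd]];
      exists d; split; try exact Hd; intros u Hu Hut; specialize (Hgd u Hu Hut).
    - pose proof (dist2_fst_le (g (segment p p' t)) (g (segment p p' u))); split_Rabs; lra.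
    - rewrite <- (proj2 (Hin t Ht)), <- (proj2 (Hin u Hu)).
      pose proof (dist2_snd_le (g (segment p p' t)) (g (segment p p' u))); split_Rabs; lra. }
  unfold segment in Hends; rewrite !Rmult_0_l, !Rmult_1_l, !Rplus_0_r in Hends.
  replace (fst p + (fst p' - fst p)) with (fst p') in Hends by ring.
  replace (snd p + (snd p' - snd p)) with (snd p') in Hends by ring.
  destruct p, p'; exact Hends.
Qed.

Lemma graph_not_B1_retract : ~ B1_retract Xsq graph.
Proof.
  intros [r [[_ [gs [Hgs Hlim]]] Hid]].
  pose proof (graph_intro 0 ltac:(lra)) as H0; pose proof (graph_intro 1 ltac:(lra)) as H1.
  destruct (Hlim _ (proj1 H0) (1 / 4) ltac:(lra)) as [N0 HN0].
  destruct (Hlim _ (proj1 H1) (1 / 4) ltac:(lra)) as [N1 HN1].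
  specialize (HN0 (N0 + N1)%nat ltac:(lia)); specialize (HN1 (N0 + N1)%nat ltac:(lia)).
  rewrite (Hid _ H0) in HN0; rewrite (Hid _ H1) in HN1.
  pose proof (dist2_fst_le (gs (N0 + N1)%nat (0, f 0)) (0, f 0)).
  pose proof (dist2_fst_le (gs (N0 + N1)%nat (1, f 1)) (1, f 1)).
  rewrite (continuous_into_graph_fst_const _ _ _ (Hgs (N0 + N1)%nat) (proj1 H0) (proj1 H1)) in *.
  simpl in *; split_Rabs; lra.
Qed.

(* With [A x := F (x, f x)], [O n] is the [1/(n+1)]-neighbourhood of [A] minus
   [q n] when [q n] is not in [A]: its intersection is the closure of [A] minus
   the rationals outside [A], and the irrational points of this closure lie in
   [A] by continuity of [f] there. *)
Lemma graph_H1_retract : H1_retract Xsq graph.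
Proof.
  exists (fun p => (fst p, f (fst p))); split; [split|].
  - intros p [Hx _]; apply graph_intro, Hx.
  - intros F [_ [_ HFopen]].
    set (A := fun x => F (x, f x)).
    set (O := fun n x => (exists y, 0 <= y <= 1 /\ A y /\ Rabs (y - x) < / INR (S n))
                         /\ (~ A (q n) -> x <> q n)).
    apply (G_delta_cylinder A O).
    + intros n x Hx [[y [Hy [HAy Hyx]]] Hqn].
      assert (Hd2 : exists d, 0 < d /\ forall z, Rabs (z - x) < d -> ~ A (q n) -> z <> q n).
      { destruct (classic (A (q n))) as [HA|HA]; [exists 1; split; [lra|tauto]|].
        exists (Rabs (x - q n)); split; [apply Rabs_pos_lt, Rminus_eq_contra, Hqn, HA|].
        intros z Hz _ ->; rewrite Rabs_minus_sym in Hz; lra. }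
      destruct Hd2 as [d2 [Hd2 Hz2]].
      exists (Rmin (/ INR (S n) - Rabs (y - x)) d2); split; [apply Rmin_pos; lra|].
      intros z Hz Hzx; pose proof (Rmin_l (/ INR (S n) - Rabs (y - x)) d2);
        pose proof (Rmin_r (/ INR (S n) - Rabs (y - x)) d2).
      split; [exists y; split; [exact Hy|split; [exact HAy|split_Rabs; lra]]|].
      apply Hz2; lra.
    + intros x Hx; split.
      * intros HAx n; split; [exists x; split; [exact Hx|split; [exact HAx|]]|].
        -- rewrite Rminus_diag, Rabs_R0; apply Rinv_0_lt_compat, lt_0_INR; lia.
        -- intros HA Hxq; apply HA; rewrite <- Hxq; exact HAx.
      * intros HO; apply NNPP; intro HAx.
        destruct (classic (exists m, x = q m)) as [[m ->]|Hirr];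
          [exact (proj2 (HO m) HAx eq_refl)|].
        assert (Hxirr : irrational01 x) by (apply irrational01_intro; assumption).
        destruct (HFopen (x, f x)) as [e [He Hgraph]]; [split; [apply graph_intro, Hx|exact HAx]|].
        destruct (f_continuous_irrational x Hxirr e He) as [d [Hd Hfd]].
        destruct (archimed_cor1 (Rmin e d)) as [[|n] [Hn Hn0]]; [apply Rmin_pos; lra|lia|].
        pose proof (Rmin_l e d); pose proof (Rmin_r e d).
        destruct (proj1 (HO n)) as [y [Hy [HAy Hyx]]].
        specialize (Hfd y Hy ltac:(lra)).
        apply (proj2 (Hgraph (y, f y) (graph_intro y Hy) ltac:(unfold dist2; simpl;
          apply Rmax_lub_lt; split_Rabs; lra))), HAy.
  - intros [x y] [_ Hy]; simpl in *; subst; reflexivity.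
Qed.

Definition graph_open (A : R -> Prop) : Prop :=
  forall x, 0 <= x <= 1 -> A x -> exists e, 0 < e /\
    forall y, 0 <= y <= 1 -> Rabs (y - x) < e -> Rabs (f y - f x) < e -> A y.

Definition irr_interior (A : R -> Prop) (x : R) : Prop :=
  0 <= x <= 1 /\ exists d, 0 < d /\ forall y, irrational01 y -> Rabs (y - x) < d -> A y.

Lemma graph_open_of_rel_open U : rel_open graph U -> graph_open (fun x => U (x, f x)).
Proof.
  intros [_ HU] x Hx Ux; destruct (HU (x, f x) Ux) as [e [He HUe]].
  exists e; split; [exact He|]; intros y Hy Hyx Hfy; apply HUe; [apply graph_intro, Hy|].
  unfold dist2; simpl; apply Rmax_lub_lt; split_Rabs; lra.
Qed.

Lemma irr_interior_mem A x : irr_interior A x -> irrational01 x -> A x.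
Proof. intros [_ [d [Hd HA]]] Hx; apply HA; [exact Hx|rewrite Rminus_diag, Rabs_R0; exact Hd]. Qed.

Lemma irr_interior_open A : rel_open1 (fun x => 0 <= x <= 1) (irr_interior A).
Proof.
  intros x Hx [_ [d [Hd HA]]]; exists (d / 2); split; [lra|]; intros y Hy Hyx.
  split; [exact Hy|exists (d / 2); split; [lra|]]; intros z Hz Hzy; apply HA; [exact Hz|].
  split_Rabs; lra.
Qed.

Lemma irr_interior_disjoint A B x : (forall y, A y -> B y -> False) ->
  irr_interior A x -> irr_interior B x -> False.
Proof.
  intros Hdis [Hx [dA [HdA HA]]] [_ [dB [HdB HB]]].
  pose proof (Rmin_l dA dB); pose proof (Rmin_r dA dB).
  destruct (Rlt_or_le x 1) as [Hx1|Hx1];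
    [destruct (irrational01_near x 1 x (Rmin dA dB)) as [y [Hy [_ Hyx]]]
    |destruct (irrational01_near 0 x x (Rmin dA dB)) as [y [Hy [_ Hyx]]]];
    try (apply Rmin_pos); try lra;
    apply (Hdis y); [apply HA|apply HB|apply HA|apply HB]; try exact Hy; lra.
Qed.

Lemma graph_open_irr_interior A x : graph_open A -> irrational01 x -> A x -> irr_interior A x.
Proof.
  intros HA Hx Ax; destruct (HA x (proj1 Hx) Ax) as [e [He HAe]].
  destruct (f_continuous_irrational x Hx e He) as [d [Hd Hfd]].
  split; [exact (proj1 Hx)|exists (Rmin e d); split; [apply Rmin_pos; lra|]].
  intros y [Hy _] Hyx; pose proof (Rmin_l e d); pose proof (Rmin_r e d).
  apply HAe; [exact Hy|lra|apply Hfd; [exact Hy|lra]].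
Qed.

Lemma irr_interior_convex A B I y0 y : (forall z, A z -> B z -> False) ->
  order_convex I -> (forall z, I z -> 0 <= z <= 1) ->
  (forall z, I z -> irr_interior A z \/ irr_interior B z) ->
  I y0 -> I y -> irr_interior A y0 -> irr_interior A y.
Proof.
  intros Hdis Hconv HI Hcov Iy0 Iy HAy0.
  destruct (Hcov y Iy) as [HAy|HBy]; [exact HAy|exfalso].
  apply (interval_connected I (irr_interior A) (irr_interior B) Hconv) with y0 y;
    try apply (rel_open1_sub I (fun x => 0 <= x <= 1) _ HI), irr_interior_open; try assumption.
  intros z _; apply irr_interior_disjoint, Hdis.
Qed.

(* An isolated point [k] of the set of points lying in neither [irr_interior A]
   nor [irr_interior B] would lie in one of them: each side of [k] is an interval
   entirely in one of them, and graph points over irrationals on that side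
   approach [(k, f k)]. *)
Lemma isolated_irr_interior A B k d : graph_open A -> (forall z, A z -> B z -> False) ->
  0 <= k <= 1 -> (exists m, k = q m) -> 0 < d ->
  (forall z, 0 <= z <= 1 -> z <> k -> Rabs (z - k) < d -> irr_interior A z \/ irr_interior B z) ->
  A k -> irr_interior A k.
Proof.
  intros HAopen Hdis Hk [m ->] Hd Hloc HAk.
  destruct (HAopen (q m) Hk HAk) as [e [He HAe]].
  split; [exact Hk|exists d; split; [exact Hd|]]; intros y [Hy Hyirr] Hyk.
  assert (Hyq : y <> q m) by apply Hyirr.
  set (I := fun z => 0 <= z <= 1 /\ Rmin y (q m) <= z <= Rmax y (q m) /\ z <> q m).
  assert (Hside : (Rmin y (q m) = y /\ Rmax y (q m) = q m /\ y < q m) \/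
                 (Rmin y (q m) = q m /\ Rmax y (q m) = y /\ q m < y))
    by (unfold Rmin, Rmax; destruct Rle_dec; [left|right]; lra).
  destruct (interval_around (Rmin y (q m)) (Rmax y (q m)) (q m) e) as [a [b Hab]];
    [destruct Hside; lra..|].
  destruct (f_approx_irrational (q m) a b e) as [y0 [Hy0 [Hy0ab Hfy0]]];
    [destruct Hside; lra..|].
  assert (Iy0 : I y0) by (unfold I; destruct Hy0, Hside; lra).
  apply (irr_interior_mem A y); [|split; assumption].
  apply (irr_interior_convex A B I y0 y Hdis).
  - intros z1 z2 z3 [? [? ?]] [? [? ?]] ?; unfold I; destruct Hside; lra.
  - intros z [Hz _]; exact Hz.
  - intros z [Hz [Hzr Hzk]]; apply Hloc; [exact Hz|exact Hzk|destruct Hside; split_Rabs; lra].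
  - exact Iy0.
  - unfold I; destruct Hside; lra.
  - apply graph_open_irr_interior; [exact HAopen|exact Hy0|].
    apply HAe; [apply Hy0|split_Rabs; lra|exact Hfy0].
Qed.

Lemma irr_interior_cover_irrational A B y : graph_open A -> graph_open B ->
  (forall x, 0 <= x <= 1 -> A x \/ B x) -> irrational01 y ->
  irr_interior A y \/ irr_interior B y.
Proof.
  intros HA HB Hcov Hy.
  destruct (Hcov y (proj1 Hy)); [left|right]; apply graph_open_irr_interior; assumption.
Qed.

Lemma irr_interior_cover A B : graph_open A -> graph_open B ->
  (forall z, A z -> B z -> False) -> (forall x, 0 <= x <= 1 -> A x \/ B x) ->
  forall x, 0 <= x <= 1 -> irr_interior A x \/ irr_interior B x.
Proof.
  intros HA HB Hdis Hcov x Hx; apply NNPP; intro Hnot.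
  set (K := fun z => 0 <= z <= 1 /\ ~ irr_interior A z /\ ~ irr_interior B z).
  assert (Henum : forall z, K z -> exists m, z = q m).
  { intros z [Hz [HnA HnB]]; apply NNPP; intro Hirr.
    destruct (irr_interior_cover_irrational A B z HA HB Hcov) as [?|?];
      [exact (irrational01_intro z Hz Hirr)|contradiction..]. }
  destruct (dense_in_itself_not_enumerated K q) as [z [Kz Hz]].
  - exists x; split; [exact Hx|tauto].
  - intros z Hlim.
    assert (Hz : 0 <= z <= 1).
    { split; apply Rnot_lt_le; intro Hout;
        [destruct (Hlim (- z)) as [k [[Hk _] Hkz]]|destruct (Hlim (z - 1)) as [k [[Hk _] Hkz]]];
        try lra; split_Rabs; lra. }
    split; [exact Hz|split; intro Hint];
      destruct (irr_interior_open _ z Hz Hint) as [d [Hd Hnear]];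
      destruct (Hlim d Hd) as [k [[Hk [HnA HnB]] Hkz]];
      [apply HnA|apply HnB]; apply Hnear; assumption.
  - intros k Kk d Hd; apply NNPP; intro Hiso.
    destruct Kk as [Hk [HnA HnB]].
    assert (Hloc : forall z, 0 <= z <= 1 -> z <> k -> Rabs (z - k) < d ->
                     irr_interior A z \/ irr_interior B z).
    { intros z Hz Hzk Hzd; apply NNPP; intro Hout; apply Hiso; exists z.
      split; [split; [exact Hz|tauto]|split; assumption]. }
    assert (Hkq : exists m, k = q m) by (apply Henum; split; [exact Hk|tauto]).
    destruct (Hcov k Hk) as [Ak|Bk];
      [apply HnA, (isolated_irr_interior A B k d)
      |apply HnB, (isolated_irr_interior B A k d)]; try assumption.
    + intros z Bz Az; exact (Hdis z Az Bz).
    + intros z Hz Hzk Hzd; apply or_comm, Hloc; assumption.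
  - destruct (Henum z Kz) as [m Hm]; exact (Hz m Hm).
Qed.

Lemma irr_interior_full A B : graph_open B -> (forall z, A z -> B z -> False) ->
  (forall x, 0 <= x <= 1 -> irr_interior A x) -> forall x, 0 <= x <= 1 -> ~ B x.
Proof.
  intros HB Hdis HA x Hx Bx.
  destruct (HB x Hx Bx) as [e [He HBe]].
  destruct (Rlt_or_le x 1) as [Hx1|Hx1];
    [destruct (interval_around x 1 x e) as [a [b Hab]]
    |destruct (interval_around 0 x x e) as [a [b Hab]]]; try lra;
    destruct (f_approx_irrational x a b e) as [y [Hy [Hyab Hfy]]]; try lra;
    apply (Hdis y); try (apply (irr_interior_mem A y); [apply HA, Hy|exact Hy]);
    apply HBe; try apply Hy; try exact Hfy; split_Rabs; lra.
Qed.

Lemma irr_interior_everywhere A B x0 : (forall z, A z -> B z -> False) ->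
  (forall x, 0 <= x <= 1 -> irr_interior A x \/ irr_interior B x) ->
  0 <= x0 <= 1 -> irr_interior A x0 -> forall x, 0 <= x <= 1 -> irr_interior A x.
Proof.
  intros Hdis Hint Hx0 HA0 x Hx.
  destruct (Hint x Hx) as [HAx|HBx]; [exact HAx|exfalso].
  apply (interval_connected (fun z => 0 <= z <= 1) (irr_interior A) (irr_interior B))
    with x0 x; try apply irr_interior_open; try assumption.
  - intros ? ? ? ? ? ?; lra.
  - intros z _; apply irr_interior_disjoint, Hdis.
Qed.

Lemma graph_connected : connected graph.
Proof.
  intros [U [V [HU [HV [[pu Upu] [[pv Vpv] [Hdis Hcov]]]]]]].
  set (A := fun x => U (x, f x)); set (B := fun x => V (x, f x)).
  assert (HA : graph_open A) by apply (graph_open_of_rel_open U HU).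
  assert (HB : graph_open B) by apply (graph_open_of_rel_open V HV).
  assert (HAB : forall z, A z -> B z -> False) by (intros z Az Bz; exact (Hdis _ (conj Az Bz))).
  assert (HBA : forall z, B z -> A z -> False) by (intros z Bz Az; exact (HAB z Az Bz)).
  assert (HcovAB : forall x, 0 <= x <= 1 -> A x \/ B x)
    by (intros x Hx; apply Hcov, graph_intro, Hx).
  assert (Hgraph : forall W p, rel_open graph W -> W p -> 0 <= fst p <= 1 /\ W (fst p, f (fst p))).
  { intros W [x y] [Hsub _] Wp; destruct (Hsub _ Wp) as [[Hx _] Hy]; simpl in *; subst; auto. }
  destruct (Hgraph U pu HU Upu) as [Hu Au], (Hgraph V pv HV Vpv) as [Hv Bv].
  pose proof (irr_interior_cover A B HA HB HAB HcovAB) as Hint.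
  destruct (Hint 0 ltac:(lra)) as [A0|B0].
  - apply (irr_interior_full A B HB HAB (irr_interior_everywhere A B 0 HAB Hint ltac:(lra) A0)
             (fst pv) Hv Bv).
  - assert (HintBA : forall x, 0 <= x <= 1 -> irr_interior B x \/ irr_interior A x)
      by (intros x Hx; apply or_comm, Hint, Hx).
    apply (irr_interior_full B A HA HBA (irr_interior_everywhere B A 0 HBA HintBA ltac:(lra) B0)
             (fst pu) Hu Au).
Qed.

End SineSeries.

Theorem mainTheorem9 (q : nat -> R) (f : R -> R) :
  enumeration_Q01 q ->
  (forall x, 0 <= x <= 1 ->
     infinite_sum (fun n => (/ 2) ^ (S n) * fn q n x) (f x)) ->
  let E : pset := fun p => Xsq p /\ snd p = f (fst p) in
  connected E /\ H1_retract Xsq E /\ ~ B1_retract Xsq E.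
Proof.
  intros Henum Hseries E.
  split; [|split].
  - exact (graph_connected q f Henum Hseries).
  - exact (graph_H1_retract q f Hseries).
  - exact (graph_not_B1_retract q f Henum Hseries).
Qed.
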